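(* Let $n\ge 3$. The Hosoya polynomial of the power graph $P(G(n))$ of the gyrogroup $G(n)$ (defined in the context) is $$H(P(G(n)),x)=2^n x^0+\frac{2^{n-1}(2^{n-1}+1)}{2}x^1+\frac{3\cdot 2^{n-1}(2^{n-1}-1)}{2}x^2.$$
   Context: Let $n\ge 3$ be an integer and $m=2^{n-1}$. Let $P(n)=\{0,1,\dots,m-1\}$, $H(n)=\{m,m+1,\dots,2^n-1\}$ and $G(n)=P(n)\cup H(n)$. For $i,j\in G(n)$ let $t,s,k\in P(n)$ be the residues modulo $m$ (taken in $\{0,\dots,m-1\}$) of $i+j$, $i+(\frac m2-1)j$ and $(\frac m2+1)i+(\frac m2-1)j$, respectively, and define $i\oplus j=t$ if $i,j\in P(n)$; $i\oplus j=t+m$ if $i\in P(n),j\in H(n)$; $i\oplus j=s+m$ if $i\in H(n),j\in P(n)$; $i\oplus j=k$ if $i,j\in H(n)$. Then $(G(n),\oplus)$ is a gyrogroup with identity $e=0$. Powers are defined by $a^1=a$, $a^{k+1}=a^k\oplus a$. The power graph $P(G(n))$ is the simple undirected graph with vertex set $G(n)$ in which distinct vertices $u,v$ are adjacent if and only if $u^k=v$ or $v^k=u$ for some positive integer $k$. For a connected graph $G$, $dis(G,i)$ denotes the number of unordered pairs $\{u,v\}$ of vertices (with $u=v$ allowed) at distance $i$, and the Hosoya polynomial is $H(G,x)=\sum_{i\ge 0} dis(G,i)x^i$. *)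

From HB Require Import structures.
From mathcomp Require Import all_boot all_order all_algebra.
From mathcomp Require Import boolp.
Set Implicit Arguments. Unset Strict Implicit. Unset Printing Implicit Defensive.
Import Order.TTheory GRing.Theory Num.Theory.

(* m = 2^(n-1); elements of G(n) are the naturals 0 .. 2^n - 1. *)
Definition gm (n : nat) : nat := 2 ^ n.-1.

(* The gyrogroup operation of G(n) (on nat; P(n) = [0,m), H(n) = [m,2m)). *)
Definition gop (n i j : nat) : nat :=
  let m := gm n in
  let t := (i + j) %% m in
  let s := (i + (m %/ 2 - 1) * j) %% m in
  let k := ((m %/ 2 + 1) * i + (m %/ 2 - 1) * j) %% m in
  if i < m then (if j < m then t else t + m)
  else (if j < m then s + m else k).

(* gpow n a k = a^k for k >= 1 : a^1 = a, a^(k+1) = a^k (+) a.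
   (The value at k = 0 is irrelevant; it is only used with k > 0.) *)
Fixpoint gpow (n a k : nat) : nat :=
  match k with
  | 0 => a
  | S k' => match k' with
            | 0 => a
            | _ => gop n (gpow n a k') a
            end
  end.

Definition V (n : nat) := 'I_(2 ^ n).

Definition padj (n : nat) (u v : V n) : Prop :=
  u <> v /\ exists k, 0 < k /\ (gpow n u k = v \/ gpow n v k = u).

Fixpoint pwalk (n : nat) (k : nat) (u v : V n) : Prop :=
  match k with
  | 0 => u = v
  | S k' => exists w : V n, padj u w /\ pwalk k' w v
  end.

Definition pdist_is (n i : nat) (u v : V n) : Prop :=
  pwalk i u v /\ (forall j, j < i -> ~ pwalk j u v).

(* dis(P(G(n)), i): number of unordered pairs {u,v} (u = v allowed)
   at distance i; unordered pairs are represented by (u,v) with u <= v. *)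
Definition dis (n i : nat) : nat :=
  #|[set p : V n * V n | (p.1 <= p.2)%N && `[< pdist_is i p.1 p.2 >]]|.

(* Hosoya polynomial; distances in a graph on 2^n vertices are < 2^n. *)
Definition hosoya (n : nat) : {poly rat} :=
  \sum_(i < 2 ^ n) ((dis n i)%:R *: 'X^i).

From HB Require Import structures.
From mathcomp Require Import all_boot all_order all_algebra.
From mathcomp Require Import boolp zify ring.
Import GRing.Theory Num.Theory.

Set Implicit Arguments.
Unset Strict Implicit.
Unset Printing Implicit Defensive.
Set Bullet Behavior "Strict Subproofs".

(* On P(n), the powers of u are its multiples modulo m = 2^(n-1), and any two
   elements of Z/2^k generate comparable subgroups, so P(n) spans a complete
   graph in P(G(n)).  The powers of an element u of H(n) are u, 0, u, 0, ...,
   and u is a power of no other element, so u is adjacent to 0 only.  Hence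
   P(G(n)) is K_m with m pendant vertices hanging from 0: there are
   m(m-1)/2 + m pairs at distance 1, and every other pair of distinct vertices
   is at distance 2 through 0. *)

Lemma mul_modn_solvable M u v : 0 < M -> gcdn u M %| v ->
  exists2 k, 0 < k & k * u = v %[mod M].
Proof.
move=> M_gt0 dvd_v; have [u0|u_gt0] := posnP u.
  rewrite u0 gcd0n /dvdn in dvd_v *.
  by exists 1; rewrite // muln0 mod0n (eqP dvd_v).
case: (egcdnP M u_gt0) => km kn def_g _.
exists (km * (v %/ gcdn u M) + M); first by rewrite addn_gt0 M_gt0 orbT.
have -> : (km * (v %/ gcdn u M) + M) * u = (v %/ gcdn u M * kn + u) * M + v.
  have := divnK dvd_v; move: (gcdn _ _) (v %/ _) def_g => g q def_g <-.
  by have := congr1 (muln q) def_g; lia.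
by rewrite modnMDl.
Qed.

Lemma pow2_mul_modn_chain j u v : exists2 k, 0 < k &
  k * u = v %[mod 2 ^ j] \/ k * v = u %[mod 2 ^ j].
Proof.
have pow_gt0 : 0 < 2 ^ j by rewrite expn_gt0.
have [a _ def_a] : exists2 a, a <= j & gcdn u (2 ^ j) = 2 ^ a.
  by apply/dvdn_pfactor; rewrite ?dvdn_gcdr.
have [b _ def_b] : exists2 b, b <= j & gcdn v (2 ^ j) = 2 ^ b.
  by apply/dvdn_pfactor; rewrite ?dvdn_gcdr.
have [le_ab|/ltnW le_ba] := leqP a b.
- have /(mul_modn_solvable pow_gt0)[k k_gt0 eq_kuv] : gcdn u (2 ^ j) %| v.
    by rewrite def_a (dvdn_trans (dvdn_exp2l 2 le_ab)) // -def_b dvdn_gcdl.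
  by exists k; last left.
- have /(mul_modn_solvable pow_gt0)[k k_gt0 eq_kvu] : gcdn v (2 ^ j) %| u.
    by rewrite def_b (dvdn_trans (dvdn_exp2l 2 le_ba)) // -def_a dvdn_gcdl.
  by exists k; last right.
Qed.

Lemma sum_ord_range N a b : \sum_(u < N) ((a <= u) && (u < b)) = minn N b - a.
Proof.
elim: N => [|N IHN]; first by rewrite big_ord0; lia.
by rewrite big_ord_recr /= IHN; case: (leqP a N); case: (ltnP N b); lia.
Qed.

Lemma double_bin2 k : 2 * 'C(k, 2) = k * k.-1.
Proof. by rewrite -(mul_bin_diag k 1) bin1. Qed.

Section PowerGraph.

Variable n : nat.
Hypothesis n_gt1 : 1 < n.

Local Notation m := (gm n).

Lemma gm_gt0 : 0 < m.
Proof. by rewrite expn_gt0. Qed.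

Lemma expn_gm : 2 ^ n = 2 * m.
Proof. by rewrite /gm -expnS prednK // ltnW. Qed.

Lemma gm_halfE : m %/ 2 + 1 + (m %/ 2 - 1) = m.
Proof.
rewrite /gm; move: n_gt1; case: n => [|[|k]] //= _.
by rewrite expnS mulKn //; have := expn_gt0 2 k; lia.
Qed.

Lemma gop_small i j : i < m -> j < m -> gop n i j = (i + j) %% m.
Proof. by move=> lt_im lt_jm; rewrite /gop /= lt_im lt_jm. Qed.

Lemma gop0_large u : m <= u < 2 * m -> gop n 0 u = u.
Proof.
case/andP=> le_mu lt_u2m; rewrite /gop /= gm_gt0 ltnNge le_mu /=.
by rewrite add0n -{1}(subnK le_mu) modnDr modn_small ?subnK //; lia.
Qed.

Lemma gop_large_diag u : m <= u -> gop n u u = 0.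
Proof.
by move=> le_mu; rewrite /gop /= ltnNge le_mu /= -mulnDl gm_halfE modnMr.
Qed.

Lemma gpowSS a k : gpow n a k.+2 = gop n (gpow n a k.+1) a.
Proof. by []. Qed.

Lemma gpow_small u k : u < m -> gpow n u k.+1 = k.+1 * u %% m.
Proof.
move=> lt_um; elim: k => [|k IHk]; first by rewrite mul1n modn_small.
by rewrite gpowSS IHk gop_small ?ltn_pmod ?gm_gt0 // modnDml -mulSnr.
Qed.

Lemma gpow_large u k : m <= u < 2 * m -> gpow n u k.+1 = if odd k then 0 else u.
Proof.
move=> u_large; have /andP[le_mu _] := u_large.
elim: k => [//|k IHk]; rewrite gpowSS IHk /=.
by case: (odd k); [rewrite gop0_large | rewrite gop_large_diag].
Qed.

Lemma gpow_zero u : u < 2 * m -> exists2 k, 0 < k & gpow n u k = 0.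
Proof.
move=> lt_u2m; have [lt_um|le_mu] := ltnP u m.
  exists m; first exact: gm_gt0.
  by rewrite -(prednK gm_gt0) gpow_small // (prednK gm_gt0) modnMr.
by exists 2; rewrite // gpow_large ?le_mu.
Qed.

Lemma gpow_closed u k v : u < 2 * m -> 0 < k -> gpow n u k = v ->
  [|| v == u, (u < m) && (v < m) | v == 0].
Proof.
move=> lt_u2m; case: k => [//|k] _ <-; have [lt_um|le_mu] := ltnP u m.
  by rewrite gpow_small // ltn_pmod ?gm_gt0 ?orbT.
by rewrite gpow_large ?le_mu //; case: (odd k); rewrite eqxx ?orbT.
Qed.

Lemma gpow_small_chain u v : u < m -> v < m ->
  exists2 k, 0 < k & gpow n u k = v \/ gpow n v k = u.
Proof.
move=> lt_um lt_vm; have [[|k] // _ eq_k] := pow2_mul_modn_chain n.-1 u v.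
exists k.+1 => //; rewrite !gpow_small //.
by case: eq_k => ->; [left | right]; rewrite modn_small.
Qed.

Definition padjb (u v : nat) : bool :=
  (u != v) && [|| (u < m) && (v < m), u == 0 | v == 0].

Lemma padjP (u v : V n) : padj u v <-> padjb u v.
Proof.
have lt_2m (w : V n) : w < 2 * m by rewrite -expn_gm.
rewrite /padj /padjb; split.
- case=> neq_uv [k [k_gt0 [pow_uv|pow_vu]]].
  all: have neq_uv' : u != v :> nat by apply/eqP => /ord_inj/neq_uv.
  all: rewrite neq_uv' /=.
  + by case/or3P: (gpow_closed (lt_2m u) k_gt0 pow_uv)
      => [/eqP/esym/ord_inj/neq_uv[]|->|->]; rewrite ?orbT.
  + by case/or3P: (gpow_closed (lt_2m v) k_gt0 pow_vu)
      => [/eqP/ord_inj/neq_uv[]|/andP[-> ->]|->]; rewrite ?orbT.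
- case/andP=> neq_uv adj_uv; split; first by move=> eq_uv; rewrite eq_uv eqxx in neq_uv.
  case/or3P: adj_uv => [/andP[lt_um lt_vm]|/eqP u0|/eqP v0].
  + by have [k] := gpow_small_chain lt_um lt_vm; exists k.
  + by have [k] := gpow_zero (lt_2m v); exists k; split; last (right; rewrite u0).
  + by have [k] := gpow_zero (lt_2m u); exists k; split; last (left; rewrite v0).
Qed.

Lemma pwalk1 (u v : V n) : pwalk 1 u v <-> padj u v.
Proof. by split => [[w [adj_uw <-]] | adj_uv] //; exists v. Qed.

Lemma pwalk2_via0 (u v : V n) : u != 0 :> nat -> v != 0 :> nat -> pwalk 2 u v.
Proof.
move=> u_neq0 v_neq0; have N_gt0 : 0 < 2 ^ n by rewrite expn_gt0.
exists (Ordinal N_gt0); split; last apply/pwalk1.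
all: by apply/padjP; rewrite /padjb /= ?orbT ?andbT // eq_sym.
Qed.

Definition pdistb (i u v : nat) : bool :=
  match i with
  | 0 => u == v
  | 1 => padjb u v
  | 2 => (u != v) && ~~ padjb u v
  | _ => false
  end.

Lemma pdist_isP i (u v : V n) : pdist_is i u v <-> pdistb i u v.
Proof.
have walk0 : pwalk 0 u v <-> u == v :> nat by split => [->|/eqP/ord_inj].
have walk2 : u != v :> nat -> ~~ padjb u v -> pwalk 2 u v.
  by move=> neq_uv; rewrite /padjb neq_uv !negb_or => /and3P[_ ? ?]; apply: pwalk2_via0.
case: i => [|[|[|i]]] /=.
- by split=> [[/walk0]|/walk0 eq_uv] //; split=> // j; rewrite ltn0.
- split=> [[/pwalk1/padjP]|adj_uv] //; split; first exact/pwalk1/padjP.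
  by case=> // _ /walk0 eq_uv; move: adj_uv; rewrite /padjb eq_uv.
- split=> [[_ min_uv]|/andP[neq_uv nadj_uv]].
    apply/andP; split; apply/negP; first by move/walk0; apply: min_uv.
    by move/padjP/pwalk1; apply: min_uv.
  split; first exact: walk2.
  case=> [|[|//]] _; first by move/walk0; rewrite (negbTE neq_uv).
  by move/pwalk1/padjP; rewrite (negbTE nadj_uv).
- split=> // -[_ min_uv]; exfalso; have [eq_uv|neq_uv] := eqVneq (u : nat) v.
    by apply: (min_uv 0) => //; apply/walk0/eqP.
  have [adj_uv|nadj_uv] := boolP (padjb u v).
    by apply: (min_uv 1) => //; apply/pwalk1/padjP.
  by apply: (min_uv 2) => //; apply: walk2.
Qed.

Lemma disE i :
  dis n i = \sum_(v < 2 ^ n) \sum_(u < 2 ^ n) ((u <= v) && pdistb i u v).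
Proof.
rewrite /dis -sum1_card big_mkcond [RHS]exchange_big [RHS]pair_big /=.
apply: eq_bigr => -[u v] _; rewrite inE /=.
by rewrite (asbool_equiv_eq (pdist_isP i u v)) asboolb; case: (_ && _).
Qed.

Lemma sum_padjb_le v :
  \sum_(u < 2 ^ n) ((u <= v) && padjb u v) = if v < m then v else 1.
Proof.
have m_gt0 := gm_gt0; have le_m2m : m <= 2 ^ n by rewrite expn_gm leq_pmull.
case: ltnP => [lt_vm|le_mv].
  rewrite (eq_bigr (fun u : 'I_(2 ^ n) => ((0 <= u) && (u < v) : nat))) => [|u _].
    by rewrite sum_ord_range; lia.
  by rewrite /padjb; lia.
rewrite (eq_bigr (fun u : 'I_(2 ^ n) => ((0 <= u) && (u < 1) : nat))) => [|u _].
  by rewrite sum_ord_range; lia.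
by rewrite /padjb; lia.
Qed.

Lemma dis0 : dis n 0 = 2 ^ n.
Proof.
rewrite disE; transitivity (\sum_(v < 2 ^ n) 1); last first.
  by rewrite sum_nat_const card_ord muln1.
apply: eq_bigr => v _.
rewrite (eq_bigr (fun u : 'I_(2 ^ n) => ((v <= u) && (u < v.+1) : nat))) => [|u _] /=.
  by rewrite sum_ord_range; have := ltn_ord v; lia.
lia.
Qed.

Lemma dis1 : dis n 1 = 'C(m, 2) + m.
Proof.
rewrite disE (eq_bigr (fun v : 'I_(2 ^ n) => if v < m then v : nat else 1)) => [|v _]; last first.
  exact: sum_padjb_le.
rewrite -(big_mkord xpredT (fun v => if v < m then v else 1)).
rewrite (big_cat_nat (leq0n m) (_ : m <= 2 ^ n)) /=; last by rewrite expn_gm leq_pmull ?gm_gt0.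
rewrite (@eq_big_nat _ _ _ 0 m _ id) => [|v /andP[_ ->]] //.
rewrite (@eq_big_nat _ _ _ m (2 ^ n) _ (fun=> 1)) => [|v /andP[le_mv _]]; last first.
  by rewrite ltnNge le_mv.
by rewrite bin2_sum sum_nat_const_nat expn_gm muln1 mul2n -addnn addnK.
Qed.

Lemma dis_sum012 : dis n 0 + dis n 1 + dis n 2 = 'C((2 ^ n).+1, 2).
Proof.
rewrite !disE -!big_split -bin2_sum big_nat_recl // big_mkord add0n.
apply: eq_bigr => v _; rewrite -!big_split /=.
rewrite (eq_bigr (fun u : 'I_(2 ^ n) => ((0 <= u) && (u < v.+1) : nat))) => [|u _].
  by rewrite sum_ord_range; have := ltn_ord v; lia.
by rewrite /padjb; lia.
Qed.

Lemma dis_ge3 i : 3 <= i -> dis n i = 0.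
Proof.
move=> i_ge3; rewrite disE big1 // => v _; rewrite big1 // => u _.
by case: i i_ge3 => [|[|[|i]]]; rewrite ?andbF.
Qed.

Lemma dis1_double : 2 * dis n 1 = m * (m + 1).
Proof. by rewrite dis1 mulnDr double_bin2; have := gm_gt0; nia. Qed.

Lemma dis2_double : 2 * dis n 2 = 3 * m * (m - 1).
Proof.
have := dis_sum012; rewrite dis0 dis1 expn_gm => sum012.
have := double_bin2 (2 * m).+1; have := double_bin2 m; have := gm_gt0; nia.
Qed.

Local Open Scope ring_scope.

Lemma hosoyaE : hosoya n =
  (dis n 0)%:R *: 'X^0 + (dis n 1)%:R *: 'X^1 + (dis n 2)%:R *: 'X^2.
Proof.
have N_ge3 : (3 <= 2 ^ n)%N by rewrite (leq_trans _ (leq_pexp2l (isT : 0 < 2)%N n_gt1)).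
rewrite /hosoya -(big_mkord xpredT (fun i => (dis n i)%:R *: 'X^i)).
rewrite (big_cat_nat (leq0n 3) N_ge3) /= [X in _ + X]big_nat_cond.
rewrite [X in _ + X]big1 => [|i /andP[/andP[i_ge3 _] _]]; last by rewrite dis_ge3 // scale0r.
by rewrite addr0 big_ltn // big_ltn // big_ltn // big_geq // addr0 addrA.
Qed.

End PowerGraph.

Local Open Scope ring_scope.

Theorem mainTheorem4 (n : nat) (hn : (3 <= n)%N) :
  hosoya n =
    (2 ^ n)%:R *: 'X^0
    + ((2 ^ n.-1 * (2 ^ n.-1 + 1))%:R / 2%:R : rat) *: 'X^1
    + ((3 * 2 ^ n.-1 * (2 ^ n.-1 - 1))%:R / 2%:R : rat) *: 'X^2.
Proof.
have n_gt1 : (1 < n)%N := ltnW hn.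
have dis1E : (dis n 1)%:R = ((2 ^ n.-1 * (2 ^ n.-1 + 1))%:R / 2%:R : rat).
  by rewrite -[(2 ^ n.-1)%N]/(gm n) -dis1_double // natrM; field.
have dis2E : (dis n 2)%:R = ((3 * 2 ^ n.-1 * (2 ^ n.-1 - 1))%:R / 2%:R : rat).
  by rewrite -[(2 ^ n.-1)%N]/(gm n) -dis2_double // natrM; field.
by rewrite hosoyaE // dis0 // dis1E dis2E.
Qed.
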